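(* Let $(\mathcal{M},\mathrm{dist})$ be a metric space, $\mathcal{F}\subset2^{\mathcal{M}}$, and $J_\beta:\mathcal{M}\to\mathbb{R}\cup\{+\infty\}$, $0<\beta<+\infty$, lower semi-continuous with $J_{\beta_1}\le J_{\beta_2}$ whenever $\beta_1\le\beta_2$; let $J_\infty=\sup_{\beta>0}J_\beta$ and $c_\beta=\inf_{A\in\mathcal{F}}\sup_AJ_\beta\in\mathbb{R}$ for all $0<\beta\le+\infty$. Assume (F1) every $A\in\mathcal{F}$ is closed, and (F2') for every $(A_n)\subset\mathcal{F}$ such that, for some $\beta$, $A_n\subset\mathcal{M}^{c_\infty+1}_\beta$ for all $n$, $\limsup_nA_n\in\mathcal{F}$. For every $0<\beta\le+\infty$ let $\eta_\beta:\mathcal{M}^{c_\infty+1}_\beta\to\mathcal{M}^{c_\infty+1}_\beta$ satisfy $(\eta1)_\beta$: $\eta_\beta(A)\in\mathcal{F}$ whenever $A\in\mathcal{F}$, $A\subset\mathcal{M}^{c_\infty+1}_\beta$; and $(\eta2)_\beta$: $J_\beta(\eta_\beta(x))\le J_\beta(x)$ for all $x\in\mathcal{M}^{c_\infty+1}_\beta$; and suppose $(J_\beta,\eta_\beta)$ satisfies $(PS)_{c_\beta}$. Then, for every $0<\beta\le+\infty$, every optimal set for $J_\beta$ at $c_\beta$ intersects $\mathcal{K}_\beta$; in particular $\mathcal{K}_\beta\neq\emptyset$.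
   Context: $\mathcal{M}^{c'}_\beta=\{x\in\mathcal{M}:J_\beta(x)\le c'\}$. A set $A$ is optimal for $J$ at $c$ if $A\in\mathcal{F}$ and $\sup_AJ=c$. $\limsup_nA_n$ is the set of limits of sequences $x_{n_j}\in A_{n_j}$, $n_j\to\infty$. $\mathcal{K}_\beta=\{x\in\mathcal{M}:J_\beta(x)=J_\beta(\eta_\beta(x))=c_\beta\}$. $(J_\beta,\eta_\beta)$ satisfies $(PS)_{c_\beta}$ if every sequence $(x_n)\subset\mathcal{M}$ with $J_\beta(x_n)\to c_\beta$ and $J_\beta(\eta_\beta(x_n))\to c_\beta$ has a subsequence converging to some $\bar x\in\mathcal{K}_\beta$. *)

From HB Require Import structures.
From mathcomp Require Import all_boot all_order all_algebra.
From mathcomp Require Import all_classical all_reals all_analysis.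
Set Implicit Arguments. Unset Strict Implicit. Unset Printing Implicit Defensive.
Import Order.TTheory GRing.Theory Num.Theory.
Local Open Scope classical_set_scope.
Local Open Scope ring_scope.
Local Open Scope ereal_scope.

Section defs.
Context {R : realType} {M : pseudoMetricType R}.

Definition Jinf (J : R -> M -> \bar R) (x : M) : \bar R :=
  ereal_sup [set J b x | b in [set b : R | (0 < b)%R]].

(* J_beta for beta in (0, +oo] : finite beta = b%:E, beta = +oo gives J_infty *)
Definition Jext (J : R -> M -> \bar R) (b : \bar R) : M -> \bar R :=
  match b with
  | r%:E => J r
  | _ => Jinf J
  end.

Definition cval (J : R -> M -> \bar R) (F : set (set M)) (b : \bar R) : \bar R :=
  ereal_inf [set ereal_sup (Jext J b @` A) | A in F].

Definition sublevel (J : R -> M -> \bar R) (b c : \bar R) : set M :=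
  [set x | Jext J b x <= c].

Definition limsup_sets (A : nat -> set M) : set M :=
  [set x | exists (phi : nat -> nat) (y : nat -> M),
      phi @ \oo --> \oo /\ (forall j, A (phi j) (y j)) /\ y @ \oo --> x].

Definition optimal (J : R -> M -> \bar R) (F : set (set M)) (b : \bar R) (A : set M) :=
  F A /\ ereal_sup (Jext J b @` A) = cval J F b.

Definition Kset (J : R -> M -> \bar R) (F : set (set M)) (eta : \bar R -> M -> M)
  (b : \bar R) : set M :=
  [set x | Jext J b x = cval J F b /\ Jext J b (eta b x) = cval J F b].

(* (PS)_{c_beta} for (J_beta, eta_beta); sequences are taken in the domain
   M^{c_infty+1}_beta of eta_beta *)
Definition PS_cond (J : R -> M -> \bar R) (F : set (set M)) (eta : \bar R -> M -> M)
  (b : \bar R) :=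
  forall x : nat -> M,
    (forall n, sublevel J b (cval J F +oo + 1) (x n)) ->
    (fun n => Jext J b (x n)) @ \oo --> cval J F b ->
    (fun n => Jext J b (eta b (x n))) @ \oo --> cval J F b ->
    exists (phi : nat -> nat) (xbar : M),
      (forall i j, (i < j)%N -> (phi i < phi j)%N) /\
      (x \o phi) @ \oo --> xbar /\ Kset J F eta b xbar.

End defs.

From HB Require Import structures.
From mathcomp Require Import all_boot all_order all_algebra.
From mathcomp Require Import all_classical all_reals all_analysis.
Import Order.TTheory GRing.Theory Num.Theory.
Local Open Scope classical_set_scope.
Local Open Scope ring_scope.
Local Open Scope ereal_scope.

(* Take sets A_n in F with sup_{A_n} J_beta <= c_beta + 1/n.  Since
   eta_beta(A_n) is again in F, sup_{A_n} (J_beta o eta_beta) >= c_beta, so some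
   x_n in A_n has J_beta(eta_beta x_n) > c_beta - 1/n; with (eta2) this squeezes
   both J_beta(x_n) and J_beta(eta_beta x_n) to c_beta, and (PS) yields a
   subsequence converging to a point of K_beta.  Taking A_n = A optimal, the
   limit lies in A because A is closed. *)

Lemma cvge_harmonic_squeeze (R : realType) (c : \bar R) (u : nat -> \bar R) :
  c \is a fin_num ->
  (forall n, c - (harmonic n)%:E <= u n <= c + (harmonic n)%:E) ->
  u @ \oo --> c.
Proof.
move=> c_fin u_bnd.
have harmonic_cvg (s : R) : (fun n => c + (s * harmonic n)%:E) @ \oo --> c.
  have h0 : (fun n => (s * harmonic n)%:E) @ \oo --> 0.
    apply: cvg_EFin; first exact: nearW.
    by rewrite -(mulr0 s); apply: cvgMl_tmp; exact: cvg_harmonic.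
  by have := cvgeD _ (cvg_cst c) h0; rewrite adde0; apply; rewrite fin_num_adde_defl.
have lo : (fun n => c - (harmonic n)%:E) @ \oo --> c.
  by have := harmonic_cvg (-1)%R; under eq_fun do rewrite mulN1r EFinN.
have hi : (fun n => c + (harmonic n)%:E) @ \oo --> c.
  by have := harmonic_cvg 1%R; under eq_fun do rewrite mul1r.
by apply: (squeeze_cvge _ lo hi); exact: nearW.
Qed.

Lemma cval_le_cval_infty {R : realType} {M : pseudoMetricType R}
  (F : set (set M)) (J : R -> M -> \bar R) {b : \bar R} :
  0 < b -> cval J F b <= cval J F +oo.
Proof.
case: b => [r| |] //; rewrite lte_fin => r_gt0.
apply: le_ereal_inf_tmp => _ [A FA <-].
have cr_le : cval J F r%:E <= ereal_sup (Jext J r%:E @` A).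
  by apply: ereal_inf_lbound; exists A.
apply: (le_trans cr_le); apply: ge_ereal_sup => _ [x Ax <-] /=.
have Jinf_le : Jinf J x <= ereal_sup (Jext J +oo @` A).
  by apply: ereal_sup_ubound; exists x.
by apply: le_trans Jinf_le; apply: ereal_sup_ubound; exists r.
Qed.

Section minimizing_sequence.
Context {R : realType} {M : pseudoMetricType R}.
Context {F : set (set M)} {J : R -> M -> \bar R} {eta : \bar R -> M -> M}.
Context {b : \bar R}.

Local Notation c := (cval J F b).
Local Notation Jb := (Jext J b).
Local Notation dom := (sublevel J b (cval J F +oo + 1)).

Hypothesis c_fin : c \is a fin_num.
Hypothesis c_le_cinf : c <= cval J F +oo.
Hypothesis eta1 : forall A, F A -> A `<=` dom -> F (eta b @` A).
Hypothesis eta2 : forall x, dom x -> Jb (eta b x) <= Jb x.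
Hypothesis PS : PS_cond J F eta b.

Lemma almost_optimal_sub_sublevel {A : set M} {n : nat} :
  ereal_sup (Jb @` A) <= c + (harmonic n)%:E -> A `<=` dom.
Proof.
move=> supA y Ay; rewrite /sublevel /=.
have Jy : Jb y <= ereal_sup (Jb @` A) by apply: ereal_sup_ubound; exists y.
apply: (le_trans Jy); apply: (le_trans supA); apply: leeD => //.
by rewrite lee_fin /= invf_le1 // ler1n.
Qed.

Lemma exists_eta_above_cval (n : nat) {A : set M} :
  F A -> A `<=` dom ->
  exists2 y, A y & c - (harmonic n)%:E < Jb (eta b y).
Proof.
move=> FA Adom.
have c_le : c <= ereal_sup (Jb @` (eta b @` A)).
  by apply: ereal_inf_lbound; exists (eta b @` A) => //; exact: eta1.
have : c - (harmonic n)%:E < ereal_sup (Jb @` (eta b @` A)).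
  apply: lt_le_trans c_le.
  by rewrite lteBlDr // lteDl // lte_fin; exact: harmonic_gt0.
by case/ereal_sup_gt => _ [_ [y Ay <-] <-]; exists y.
Qed.

Lemma minimizing_sequence_cluster_in_K (A : nat -> set M) :
  (forall n, F (A n)) ->
  (forall n, ereal_sup (Jb @` A n) <= c + (harmonic n)%:E) ->
  exists (x : nat -> M) (phi : nat -> nat) (xbar : M),
    (forall n, A n (x n)) /\ (x \o phi) @ \oo --> xbar /\ Kset J F eta b xbar.
Proof.
move=> FA supA.
have Adom n := almost_optimal_sub_sublevel (supA n).
have /choice[x xP] n : exists y, A n y /\ c - (harmonic n)%:E < Jb (eta b y).
  by have [y] := exists_eta_above_cval n (FA n) (Adom n); exists y.
have Ax n : A n (x n) by case: (xP n).
have Jx_le n : Jb (x n) <= c + (harmonic n)%:E.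
  have Jx : Jb (x n) <= ereal_sup (Jb @` A n) by apply: ereal_sup_ubound; exists (x n).
  exact: le_trans Jx (supA n).
have eta_le n : Jb (eta b (x n)) <= Jb (x n) := eta2 _ (Adom n _ (Ax n)).
have eta_gt n : c - (harmonic n)%:E < Jb (eta b (x n)) by case: (xP n).
have Jx_cvg : (fun n => Jb (x n)) @ \oo --> c.
  apply: cvge_harmonic_squeeze => // n.
  by rewrite Jx_le (le_trans (ltW (eta_gt n))).
have Jeta_cvg : (fun n => Jb (eta b (x n))) @ \oo --> c.
  apply: cvge_harmonic_squeeze => // n.
  by rewrite (ltW (eta_gt n)) (le_trans (eta_le n)).
have [phi [xbar [_ [cvg Kxbar]]]] := PS x (fun n => Adom n _ (Ax n)) Jx_cvg Jeta_cvg.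
by exists x, phi, xbar.
Qed.

End minimizing_sequence.

Theorem theorem2p8 (R : realType) (M : pseudoMetricType R)
  (F : set (set M)) (J : R -> M -> \bar R) (eta : \bar R -> M -> M)
  (Hmetric : hausdorff_space M)
  (HJval : forall b x, (0 < b)%R -> J b x != -oo)
  (HJlsc : forall b, (0 < b)%R -> lower_semicontinuous (J b))
  (HJmono : forall b1 b2 x, (0 < b1)%R -> (b1 <= b2)%R -> J b1 x <= J b2 x)
  (Hc : forall b, 0 < b -> cval J F b \is a fin_num)
  (F1 : forall A, F A -> closed A)
  (F2' : forall A : nat -> set M, (forall n, F (A n)) ->
     (exists b : R, (0 < b)%R /\
        forall n, A n `<=` sublevel J b%:E (cval J F +oo + 1)) ->
     F (limsup_sets A))
  (Heta_maps : forall b, 0 < b -> forall x,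
     sublevel J b (cval J F +oo + 1) x -> sublevel J b (cval J F +oo + 1) (eta b x))
  (Heta1 : forall b, 0 < b -> forall A, F A ->
     A `<=` sublevel J b (cval J F +oo + 1) -> F (eta b @` A))
  (Heta2 : forall b, 0 < b -> forall x,
     sublevel J b (cval J F +oo + 1) x -> Jext J b (eta b x) <= Jext J b x)
  (HPS : forall b, 0 < b -> PS_cond J F eta b) :
  forall b : \bar R, 0 < b ->
    (forall A, optimal J F b A -> exists2 x, A x & Kset J F eta b x) /\
    (exists x, Kset J F eta b x).
Proof.
move=> b b_gt0.
have cluster := minimizing_sequence_cluster_in_K (Hc b b_gt0)
  (cval_le_cval_infty F J b_gt0) (Heta1 b b_gt0) (Heta2 b b_gt0) (HPS b b_gt0).
split=> [A [FA supA]|].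
  have supA_le n : ereal_sup (Jext J b @` A) <= cval J F b + (harmonic n)%:E.
    by rewrite supA leeDl // lee_fin; exact: harmonic_ge0.
  have [x [phi [xbar [Ax [cvg Kxbar]]]]] := cluster (fun=> A) (fun=> FA) supA_le.
  exists xbar => //.
  by apply: (closed_cvg _ (F1 _ FA) _ _ cvg); apply: nearW => n; exact: Ax.
have /choice[A AP] n : exists A, F A /\
    ereal_sup (Jext J b @` A) <= cval J F b + (harmonic n)%:E.
  have [_ [A FA <-] lt] := lb_ereal_inf_adherent (harmonic_gt0 n) (Hc b b_gt0).
  by exists A; split => //; exact: ltW.
have [x [phi [xbar [_ [_ Kxbar]]]]] :=
  cluster A (fun n => proj1 (AP n)) (fun n => proj2 (AP n)).
by exists xbar.
Qed.
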